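(* Let $n\geq 2$, $\sigma\in S_n$ and $I\sqcup J=[2,n]$. If $A^\sigma_{[2,n],\emptyset}=A^{\mathrm{id}}_{I,J}$, then $A^{\rho\sigma}_{[2,n],\emptyset}=A^{\rho}_{I,J}$ for every $\rho\in S_n$.
   Context: Let $w_{ij}$, $1\leq i,j\leq n$, be formal variables subject only to $w_{ij}+w_{ji}=0$. Let $[2,n]=\{2,\dots,n\}$. For $\sigma\in S_n$ and a disjoint decomposition $I\sqcup J=[2,n]$, set $$A^\sigma_{I,J}:=\sum_{i\in I}\sum_{\ell=1}^{i-1}w_{\sigma(\ell)\sigma(i)}-\sum_{j\in J}\sum_{\ell=1}^{j-1}w_{\sigma(\ell)\sigma(j)}.$$ Permutations are composed right-to-left: $(\rho\sigma)(k)=\rho(\sigma(k))$. *)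

From mathcomp Require Import all_boot all_order all_algebra all_fingroup.
Set Implicit Arguments. Unset Strict Implicit. Unset Printing Implicit Defensive.
Import GRing.Theory.
Local Open Scope ring_scope.

(* Formal variables w_ij (indices 0..n-1 stand for 1..n), subject only to
   w_ij + w_ji = 0.  We model the free abelian group they generate by
   integer vectors indexed by ordered pairs: w_ij := e_(i,j) - e_(j,i).
   For i <> j this identifies the Z-span of {w_ij} with the free abelian
   group on {w_ij : i < j}, i.e. exactly the relations w_ij + w_ji = 0. *)
Definition wexpr (n : nat) := {ffun 'I_n * 'I_n -> int}.

Definition wvar (n : nat) (i j : 'I_n) : wexpr n :=
  [ffun p => ((p == (i, j))%:R - (p == (j, i))%:R)%R].

(* A^sigma_{I,J} = sum_{i in I} sum_{l < i} w_{sigma l, sigma i}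
                 - sum_{j in J} sum_{l < j} w_{sigma l, sigma j}
   (0-based indices; [2,n] becomes {i | 0 < i}). *)
Definition Aexpr (n : nat) (s : {perm 'I_n}) (I J : {set 'I_n}) : wexpr n :=
  (\sum_(i in I) \sum_(l < n | (l < i)%N) wvar (s l) (s i))
  - (\sum_(j in J) \sum_(l < n | (l < j)%N) wvar (s l) (s j)).

Definition two_n (n : nat) : {set 'I_n} := [set i : 'I_n | (0 < i)%N].

From HB Require Import structures.
From mathcomp Require Import all_boot all_order all_algebra all_fingroup.
Import GRing.Theory.
Local Open Scope ring_scope.

(* Renaming the indices of the variables w_ij by a permutation r is an
   additive map, and it sends A^s_{I,J} to A^{r s}_{I,J}.  Renaming both
   sides of the hypothesis A^sigma_{[2,n],0} = A^id_{I,J} by rho gives the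
   conclusion. *)

Section Relabel.

Variable n : nat.
Implicit Types (r s : {perm 'I_n}) (f : wexpr n).

Definition wrelabel r f : wexpr n :=
  [ffun p : 'I_n * 'I_n => f ((r^-1)%g p.1, (r^-1)%g p.2)].

Lemma wrelabel_is_zmod_morphism r : zmod_morphism (wrelabel r).
Proof. by move=> f g; apply/ffunP => p; rewrite !ffunE. Qed.

HB.instance Definition _ r :=
  GRing.isZmodMorphism.Build (wexpr n) (wexpr n) (wrelabel r)
    (wrelabel_is_zmod_morphism r).

Lemma wrelabel_wvar r (i j : 'I_n) : wrelabel r (wvar i j) = wvar (r i) (r j).
Proof.
by apply/ffunP => -[x y]; rewrite !ffunE /= !xpair_eqE !(canF_eq (permKV r)).
Qed.

Lemma Aexpr_permM s r (I J : {set 'I_n}) :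
  Aexpr (s * r)%g I J = wrelabel r (Aexpr s I J).
Proof.
rewrite [RHS]raddfB; congr (_ - _); rewrite raddf_sum;
  apply: eq_bigr => i _; rewrite raddf_sum;
  by apply: eq_bigr => l _; rewrite /= wrelabel_wvar !permM.
Qed.

End Relabel.

(* Note: in mathcomp, (s * r)%g x = r (s x), so rho \o sigma is (sigma * rho)%g. *)
Theorem lemma3p6 (n : nat) (hn : (2 <= n)%N) (sigma : {perm 'I_n})
  (I J : {set 'I_n}) (hdisj : [disjoint I & J]) (hcov : I :|: J = two_n n) :
  Aexpr sigma (two_n n) set0 = Aexpr 1%g I J ->
  forall rho : {perm 'I_n}, Aexpr (sigma * rho)%g (two_n n) set0 = Aexpr rho I J.
Proof.
move=> hA rho.
by rewrite Aexpr_permM hA -Aexpr_permM mul1g.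
Qed.
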